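(* Let $\Lambda:\mathcal{B}(\mathcal{H}_d)\to\mathcal{B}(\mathcal{H}_d)$ be a quantum operation. Then the map $$\Lambda'_{\min}[\varrho]=\sqrt{I-\Lambda^{\dagger}[I]}\,\varrho\,\sqrt{I-\Lambda^{\dagger}[I]}$$ is an extension for $\Lambda$, and any extension $\Lambda'$ for $\Lambda$ has the form $\Lambda'=\Phi\circ\Lambda'_{\min}$ for some quantum channel $\Phi:\mathcal{B}(\mathcal{H}_d)\to\mathcal{B}(\mathcal{H}_d)$.
   Context: $\mathcal{H}_d$ is a Hilbert space of finite dimension $d>1$. A quantum operation is a linear map $\Lambda:\mathcal{B}(\mathcal{H}_d)\to\mathcal{B}(\mathcal{H}_d)$ that is completely positive and trace nonincreasing, equivalently $\Lambda^\dagger[I]\le I$, where $\Lambda^\dagger$ is the dual map defined by $\mathrm{tr}[\Lambda[X]Y]=\mathrm{tr}[X\Lambda^\dagger[Y]]$. A quantum channel is a completely positive trace preserving map ($\Phi^\dagger[I]=I$). A quantum operation $\Lambda'$ is called an extension for the quantum operation $\Lambda$ if $\Lambda+\Lambda'$ is trace preserving. *)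

From HB Require Import structures.
From mathcomp Require Import all_boot all_order all_algebra.
Set Implicit Arguments. Unset Strict Implicit. Unset Printing Implicit Defensive.
Import Order.TTheory GRing.Theory Num.Theory.
Local Open Scope ring_scope.
Local Open Scope sesquilinear_scope.

(* B(H_d) is modelled as 'M[C]_d, C a numClosedFieldType (e.g. complex numbers). *)
Section QDefs.
Variables (C : numClosedFieldType) (d : nat).

Definition adj m n (A : 'M[C]_(m, n)) : 'M[C]_(n, m) := A ^t*.

Definition psd (A : 'M[C]_d) : Prop :=
  forall v : 'cV[C]_d, 0 <= (adj v *m A *m v) 0 0.

Definition loewner_le (A B : 'M[C]_d) : Prop := psd (B - A).

(* An operator on C^k (x) C^d = (C^d)^k, given as a k x k block matrix of
   d x d blocks, is positive semidefinite. *)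
Definition block_psd (k : nat) (X : 'I_k -> 'I_k -> 'M[C]_d) : Prop :=
  forall v : 'I_k -> 'cV[C]_d,
    0 <= \sum_(i < k) \sum_(j < k) (adj (v i) *m X i j *m v j) 0 0.

(* complete positivity: id_k (x) f is positive for all k *)
Definition completely_positive (f : 'M[C]_d -> 'M[C]_d) : Prop :=
  forall (k : nat) (X : 'I_k -> 'I_k -> 'M[C]_d),
    block_psd X -> block_psd (fun i j => f (X i j)).

(* dual map, characterized by tr[f X * Y] = tr[X * dual f Y]:
   (dual f Y)_{j i} = tr[f(E_{ij}) Y] *)
Definition dual_map (f : 'M[C]_d -> 'M[C]_d) (Y : 'M[C]_d) : 'M[C]_d :=
  \matrix_(j, i) \tr (f (delta_mx i j) *m Y).

Definition quantum_operation (f : 'M[C]_d -> 'M[C]_d) : Prop :=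
  linear f /\ completely_positive f /\ loewner_le (dual_map f 1%:M) 1%:M.

Definition trace_preserving (f : 'M[C]_d -> 'M[C]_d) : Prop :=
  dual_map f 1%:M = 1%:M.

Definition quantum_channel (f : 'M[C]_d -> 'M[C]_d) : Prop :=
  linear f /\ completely_positive f /\ trace_preserving f.

Definition extension (f f' : 'M[C]_d -> 'M[C]_d) : Prop :=
  quantum_operation f' /\ trace_preserving (fun X => f X + f' X).

(* square root of a (normal, in particular psd) matrix via the spectral
   decomposition A = P^-1 diag(s) P with P unitary: sqrt A = P^-1 diag(sqrt s) P;
   for psd A this is the unique psd square root. *)
Definition msqrt (A : 'M[C]_d) : 'M[C]_d :=
  invmx (spectralmx A) *m diag_mx (map_mx (fun x : C => sqrtC x) (spectral_diag A))
    *m spectralmx A.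

Definition Lmin (f : 'M[C]_d -> 'M[C]_d) (rho : 'M[C]_d) : 'M[C]_d :=
  let S := msqrt (1%:M - dual_map f 1%:M) in S *m rho *m S.

End QDefs.

From HB Require Import structures.
From mathcomp Require Import all_boot all_order all_algebra.
From mathcomp Require Import ring.
Import GRing.Theory Num.Theory.
Local Open Scope ring_scope.
Set Implicit Arguments. Unset Strict Implicit. Unset Printing Implicit Defensive.

(* Let A = I - L^dual[I], which is psd, and S = sqrt A.  The map X |-> S X S has
   dual map S S = A, exactly what L lacks to be trace preserving.  Conversely, an
   extension L' has L'^dual[I] = A, so for the projection Q onto ker A the psd
   matrix L'[Q Q] has trace tr(Q Q A) = 0; complete positivity then forces
   L'[Q Y] = L'[Y Q] = 0 for all Y.  With P the pseudo-inverse of S we have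
   P S = S P = I - Q, so Phi[X] = L'[P X P] + Q X Q satisfies
   Phi[S X S] = L'[(I - Q) X (I - Q)] = L'[X], and Phi is trace preserving since
   P A P + Q Q = I. *)

Section AdjointForms.
Variable C : numClosedFieldType.

Lemma adjD m n (A B : 'M[C]_(m, n)) : adj (A + B) = adj A + adj B.
Proof. by apply/matrixP => i j; rewrite !mxE rmorphD. Qed.

Lemma adjZ m n (a : C) (A : 'M[C]_(m, n)) : adj (a *: A) = a^* *: adj A.
Proof. by apply/matrixP => i j; rewrite !mxE rmorphM. Qed.

Lemma adjM m n p (A : 'M[C]_(m, n)) (B : 'M[C]_(n, p)) :
  adj (A *m B) = adj B *m adj A.
Proof. by rewrite /adj trmx_mul map_mxM. Qed.

Lemma adjK m n (A : 'M[C]_(m, n)) : adj (adj A) = A.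
Proof. exact: trmxCK. Qed.

Lemma adj_sum m n I (r : seq I) (P : pred I) (F : I -> 'M[C]_(m, n)) :
  adj (\sum_(i <- r | P i) F i) = \sum_(i <- r | P i) adj (F i).
Proof.
apply/matrixP => i j; rewrite !mxE !summxE rmorph_sum.
by apply: eq_bigr => k _; rewrite !mxE.
Qed.

Definition qform m n (M : 'M[C]_(m, n)) (x : 'cV[C]_m) (y : 'cV[C]_n) : C :=
  (adj x *m M *m y) 0 0.

Lemma qformE m n (M : 'M[C]_(m, n)) x y : (adj x *m M *m y) 0 0 = qform M x y.
Proof. by []. Qed.

Lemma qformB n (M N : 'M[C]_n) x y : qform (M - N) x y = qform M x y - qform N x y.
Proof. by rewrite /qform mulmxBr mulmxBl !mxE. Qed.

Lemma qform_adj n (M : 'M[C]_n) x : qform (adj M) x x = (qform M x x)^*.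
Proof.
have -> : (qform M x x)^* = (adj (adj x *m M *m x)) 0 0 by rewrite /qform /adj !mxE.
by rewrite !adjM adjK mulmxA.
Qed.

Lemma qform_delta n (M : 'M[C]_n) i j : qform M (delta_mx i 0) (delta_mx j 0) = M i j.
Proof.
rewrite /qform; have -> : adj (delta_mx i 0 : 'cV[C]_n) = delta_mx 0 i.
  by apply/matrixP => a b; rewrite !mxE rmorph_nat andbC.
by rewrite -rowE -colE !mxE.
Qed.

Lemma qformZl m n (M : 'M[C]_(m, n)) a x y : qform M (a *: x) y = a^* * qform M x y.
Proof. by rewrite /qform adjZ -!scalemxAl mxE. Qed.

Lemma qformZr m n (M : 'M[C]_(m, n)) a x y : qform M x (a *: y) = a * qform M x y.
Proof. by rewrite /qform -scalemxAr mxE. Qed.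

Lemma qform_combination n (M : 'M[C]_n) t x y :
  qform M (t *: x + y) (t *: x + y) =
  t^* * t * qform M x x + t^* * qform M x y + t * qform M y x + qform M y y.
Proof.
rewrite /qform adjD adjZ !mulmxDl !mulmxDr -!scalemxAl -!scalemxAr !mxE; ring.
Qed.

End AdjointForms.

Section Positivity.
Variable C : numClosedFieldType.

Lemma real_affine_ge0_slope0 (z e : C) :
  (forall s : C, s \is Num.real -> 0 <= s * z + e) -> z = 0.
Proof.
move=> ge0; have e_ge0 : 0 <= e by have := ge0 0 (rpred0 _); rewrite mul0r add0r.
have zR : z \is Num.real.
  have := ge0 1 (rpred1 _); rewrite mul1r => /ger0_real zeR.
  by have := rpredB zeR (ger0_real e_ge0); rewrite addrK.
apply/eqP; apply: contraT => z_neq0.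
have sR : - (e + 1) / z \is Num.real.
  by rewrite rpredM ?rpredV // rpredN rpredD ?rpred1 ?ger0_real.
have := ge0 _ sR; rewrite mulfVK // opprD addrAC addNr add0r.
by rewrite oppr_ge0 ler10.
Qed.

Lemma sesqui_affine_ge0_coef0 (b c e : C) :
  (forall t : C, 0 <= t^* * b + t * c + e) -> b = 0 /\ c = 0.
Proof.
move=> ge0.
have bc0 : b + c = 0.
  apply: (real_affine_ge0_slope0 (e := e)) => s sR.
  by have := ge0 s; rewrite conj_Creal // mulrDr.
have cb0 : 'i * (c - b) = 0.
  apply: (real_affine_ge0_slope0 (e := e)) => s sR; have := ge0 ('i * s).
  by rewrite rmorphM /= conjCi conj_Creal //; congr (0 <= _ + _); ring.
have cb : c = b.
  by apply/eqP; rewrite -subr_eq0; move/eqP: cb0; rewrite mulf_eq0 (negPf (neq0Ci _)).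
have b0 : b *+ 2 = 0 by rewrite mulr2n -{2}cb bc0.
by move/eqP: b0; rewrite mulrn_eq0 /= => /eqP b0; rewrite cb b0.
Qed.

Lemma qform_ge0_diag0 n (M : 'M[C]_n) i j :
  (forall v, 0 <= qform M v v) -> M i i = 0 -> M i j = 0 /\ M j i = 0.
Proof.
move=> ge0 Mii; apply: (sesqui_affine_ge0_coef0 (e := M j j)) => t.
have := ge0 (t *: delta_mx i 0 + delta_mx j 0).
by rewrite qform_combination !qform_delta Mii mulr0 add0r.
Qed.

Lemma qform_eq0 n (M : 'M[C]_n) : (forall v, qform M v v = 0) -> M = 0.
Proof.
move=> M0; apply/matrixP => i j; rewrite mxE.
have ge0 v : 0 <= qform M v v by rewrite M0.
have Mii : M i i = 0 by rewrite -qform_delta M0.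
by case: (qform_ge0_diag0 j ge0 Mii).
Qed.

Lemma psd_diag_ge0 n (M : 'M[C]_n) i : psd M -> 0 <= M i i.
Proof. by rewrite -qform_delta; apply. Qed.

Lemma psd_tr_ge0 n (M : 'M[C]_n) : psd M -> 0 <= \tr M.
Proof. by move=> Mpsd; apply: sumr_ge0 => i _; apply: psd_diag_ge0. Qed.

Lemma psd_tr_eq0 n (M : 'M[C]_n) : psd M -> \tr M = 0 -> M = 0.
Proof.
move=> Mpsd tr0.
have diag0 i : M i i = 0.
  apply: (psumr_eq0P (P := predT) (F := fun i => M i i)) => // k _.
  exact: psd_diag_ge0.
apply/matrixP => i j; rewrite mxE.
by case: (qform_ge0_diag0 j Mpsd (diag0 i)).
Qed.

Lemma psd_adj n (M : 'M[C]_n) : psd M -> adj M = M.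
Proof.
move=> Mpsd; apply/eqP; rewrite -subr_eq0; apply/eqP/qform_eq0 => v.
by rewrite qformB qform_adj conj_Creal ?subrr // ger0_real //; apply: Mpsd.
Qed.

Lemma psd_normal n (M : 'M[C]_n) : psd M -> M \is normalmx.
Proof. by move/psd_adj => MH; apply/normalmxP; rewrite -/(adj M) MH. Qed.

End Positivity.

Section Superoperators.
Variables (C : numClosedFieldType) (d : nat).
Implicit Types (f g : 'M[C]_d -> 'M[C]_d) (B : 'M[C]_d).

Definition pack_linear f (f_lin : linear f) : {linear 'M[C]_d -> 'M[C]_d} :=
  HB.pack f (GRing.isLinear.Build C _ _ _ f f_lin).

Lemma linear_add f g : linear f -> linear g -> linear (fun X => f X + g X).
Proof. by move=> f_lin g_lin a X Y; rewrite f_lin g_lin scalerDr addrACA. Qed.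

Lemma linear_comp f g : linear f -> linear g -> linear (fun X => f (g X)).
Proof. by move=> f_lin g_lin a X Y; rewrite g_lin f_lin. Qed.

Lemma linear_mulmx B B' : linear (fun X => B *m X *m B').
Proof. by move=> a X Y; rewrite mulmxDr mulmxDl -scalemxAr -scalemxAl. Qed.

Lemma compress_compl f Q X : linear f ->
  (forall Y, f (Q *m Y) = 0) -> (forall Y, f (Y *m Q) = 0) ->
  f ((1%:M - Q) *m X *m (1%:M - Q)) = f X.
Proof.
move=> f_lin fQY fYQ; have -> : f = pack_linear f_lin by [].
by rewrite mulmxBl mul1mx mulmxBr mulmx1 !linearB /= fQY fYQ !subr0.
Qed.

Lemma trace_dual_map f X : linear f -> \tr (f X) = \tr (X *m dual_map f 1%:M).
Proof.
move=> f_lin.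
have -> : \tr (X *m dual_map f 1%:M) = \sum_i \sum_j X i j * \tr (f (delta_mx i j)).
  rewrite /mxtrace; apply: eq_bigr => i _; rewrite mxE; apply: eq_bigr => j _.
  by rewrite mxE mulmx1.
have -> : f = pack_linear f_lin by [].
rewrite {1}(matrix_sum_delta X) linear_sum raddf_sum; apply: eq_bigr => i _.
rewrite linear_sum raddf_sum; apply: eq_bigr => j _.
by rewrite linearZ /= mxtraceZ.
Qed.

Lemma dual_map1_uniq f M :
  (forall X, \tr (f X) = \tr (X *m M)) -> dual_map f 1%:M = M.
Proof.
move=> trE; apply/matrixP => j i; rewrite mxE mulmx1 trE.
rewrite -(mul_delta_mx (0 : 'I_1)) -mulmxA mxtrace_mulC -rowE -colE.
by rewrite /mxtrace big_ord1 !mxE.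
Qed.

Lemma dual_mapD f g Y :
  dual_map (fun X => f X + g X) Y = dual_map f Y + dual_map g Y.
Proof. by apply/matrixP => j i; rewrite !mxE mulmxDl mxtraceD. Qed.

Lemma trace_preserving_add_dual f g : trace_preserving (fun X => f X + g X) ->
  dual_map g 1%:M = 1%:M - dual_map f 1%:M.
Proof.
rewrite /trace_preserving dual_mapD => /(congr1 (fun M => M - dual_map f 1%:M)).
by rewrite addrAC subrr add0r.
Qed.

Lemma dual_map_mulmx B B' : dual_map (fun X => B *m X *m B') 1%:M = B' *m B.
Proof.
by apply: dual_map1_uniq => X; rewrite -mulmxA mxtrace_mulC !mulmxA.
Qed.

Lemma dual_map_comp_mulmx f B B' : linear f ->
  dual_map (fun X => f (B *m X *m B')) 1%:M = B' *m dual_map f 1%:M *m B.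
Proof.
move=> f_lin; apply: dual_map1_uniq => X.
by rewrite trace_dual_map // -!mulmxA mxtrace_mulC !mulmxA.
Qed.

Lemma block_psd_gram k m (B : 'I_k -> 'M[C]_(d, m)) :
  block_psd (fun i j => B i *m adj (B j)).
Proof.
move=> v; set w := \sum_j adj (B j) *m v j.
have -> : \sum_i \sum_j (adj (v i) *m (B i *m adj (B j)) *m v j) 0 0 = (adj w *m w) 0 0.
  rewrite /w adj_sum mulmx_suml summxE; apply: eq_bigr => i _.
  rewrite adjM adjK mulmx_sumr summxE; apply: eq_bigr => j _.
  by rewrite !mulmxA.
by rewrite mxE; apply: sumr_ge0 => i _; rewrite !mxE mulrC mul_conjC_ge0.
Qed.

Lemma block_psd2_offdiag0 (X : 'I_2 -> 'I_2 -> 'M[C]_d) :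
  block_psd X -> X ord0 ord0 = 0 -> X ord0 ord_max = 0 /\ X ord_max ord0 = 0.
Proof.
move=> Xpsd X00.
have entries a b : X ord0 ord_max a b = 0 /\ X ord_max ord0 b a = 0.
  apply: (sesqui_affine_ge0_coef0 (e := X ord_max ord_max b b)) => t.
  have := Xpsd (fun i => if val i == 0%N then t *: delta_mx a 0 else delta_mx b 0).
  rewrite !big_ord_recl !big_ord0 /= !addr0.
  have -> : lift ord0 ord0 = ord_max :> 'I_2 by apply: val_inj.
  rewrite X00 mulmx0 mul0mx mxE add0r.
  by rewrite !qformE !qformZl !qformZr !qform_delta addrA.
split; apply/matrixP => a b; rewrite mxE.
  exact: (entries a b).1.
exact: (entries b a).2.
Qed.

Lemma psd_block1 (M : 'M[C]_d) : block_psd (fun _ _ : 'I_1 => M) -> psd M.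
Proof. by move=> Mpsd v; have := Mpsd (fun=> v); rewrite !big_ord1. Qed.

Lemma cp_psd_gram f m (B : 'M[C]_(d, m)) :
  completely_positive f -> psd (f (B *m adj B)).
Proof. by move=> f_cp; apply/psd_block1/(f_cp 1 _ (block_psd_gram (fun=> B))). Qed.

Lemma cp_gram_eq0 f B Y : completely_positive f -> f (B *m adj B) = 0 ->
  f (B *m adj Y) = 0 /\ f (Y *m adj B) = 0.
Proof.
move=> f_cp fBB.
pose G (i : 'I_2) := if val i == 0%N then B else Y.
have := block_psd2_offdiag0 (f_cp 2 _ (block_psd_gram G)).
by rewrite /G /=; apply.
Qed.

Lemma eq_cp f g : f =1 g -> completely_positive f -> completely_positive g.
Proof.
move=> fg f_cp k X Xpsd v; have := f_cp k X Xpsd v.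
by under eq_bigr do under eq_bigr do rewrite fg.
Qed.

Lemma cp_mulmx B : completely_positive (fun X => adj B *m X *m B).
Proof.
move=> k X Xpsd v; have := Xpsd (fun i => B *m v i); congr (0 <= _).
by apply: eq_bigr => i _; apply: eq_bigr => j _; rewrite adjM !mulmxA.
Qed.

Lemma cp_comp f g : completely_positive f -> completely_positive g ->
  completely_positive (fun X => f (g X)).
Proof. by move=> f_cp g_cp k X Xpsd; apply/f_cp/g_cp. Qed.

Lemma cp_add f g : completely_positive f -> completely_positive g ->
  completely_positive (fun X => f X + g X).
Proof.
move=> f_cp g_cp k X Xpsd v; have := addr_ge0 (f_cp k X Xpsd v) (g_cp k X Xpsd v).
rewrite -big_split; congr (0 <= _); apply: eq_bigr => i _.
by rewrite -big_split; apply: eq_bigr => j _; rewrite mulmxDr mulmxDl [RHS]mxE.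
Qed.

Lemma psd_dual_map1 f : linear f -> completely_positive f -> psd (dual_map f 1%:M).
Proof.
move=> f_lin f_cp v.
have -> : (adj v *m dual_map f 1%:M *m v) 0 0 = \tr (f (v *m adj v)).
  by rewrite trace_dual_map // -[in RHS]mulmxA mxtrace_mulC /mxtrace big_ord1.
exact/psd_tr_ge0/cp_psd_gram.
Qed.

End Superoperators.

Section SpectralCalculus.
Variables (C : numClosedFieldType) (d : nat).
Implicit Types (A : 'M[C]_d) (g h : C -> C).

Definition mxfun A g : 'M[C]_d :=
  invmx (spectralmx A) *m diag_mx (map_mx g (spectral_diag A)) *m spectralmx A.

Lemma msqrtE A : msqrt A = mxfun A sqrtC.
Proof. by []. Qed.

Lemma spectralmx_adj A : spectralmx A *m adj (spectralmx A) = 1%:M.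
Proof. exact/unitarymxP/spectral_unitarymx. Qed.

Lemma invmx_spectral A : invmx (spectralmx A) = adj (spectralmx A).
Proof. exact/invmx_unitary/spectral_unitarymx. Qed.

Lemma eq_mxfun A g h : g =1 h -> mxfun A g = mxfun A h.
Proof. by move=> gh; rewrite /mxfun (eq_map_mx _ gh). Qed.

Lemma mxfunM A g h : mxfun A g *m mxfun A h = mxfun A (fun x => g x * h x).
Proof.
rewrite /mxfun !mulmxA -[_ *m spectralmx A *m invmx _]mulmxA invmx_spectral.
rewrite spectralmx_adj mulmx1 -[_ *m diag_mx _ *m diag_mx _]mulmxA mulmx_diag.
by congr (_ *m diag_mx _ *m _); apply/matrixP => i j; rewrite !mxE (ord1 i).
Qed.

Lemma mxfunD A g h : mxfun A g + mxfun A h = mxfun A (fun x => g x + h x).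
Proof.
rewrite /mxfun -mulmxDl -mulmxDr; congr (_ *m _ *m _).
by apply/matrixP => i j; rewrite !mxE mulrnDl.
Qed.

Lemma mxfun0 A : mxfun A (fun=> 0) = 0.
Proof.
rewrite /mxfun (_ : diag_mx _ = 0) ?mulmx0 ?mul0mx //.
by apply/matrixP => i j; rewrite !mxE mul0rn.
Qed.

Lemma mxfun1 A : mxfun A (fun=> 1) = 1%:M.
Proof.
rewrite /mxfun (_ : diag_mx _ = 1%:M) ?mulmx1; last first.
  by apply/matrixP => i j; rewrite !mxE.
by rewrite invmx_spectral; apply/mulmx1C/spectralmx_adj.
Qed.

Lemma mxfun_adj A g : (forall j, g (spectral_diag A 0 j) \is Num.real) ->
  adj (mxfun A g) = mxfun A g.
Proof.
move=> gR; rewrite /mxfun invmx_spectral !adjM adjK mulmxA.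
congr (_ *m _ *m _); apply/matrixP => i j; rewrite !mxE eq_sym.
by case: eqP => [->|_]; rewrite ?mulr1n ?mulr0n ?conj_Creal ?rmorph0.
Qed.

Lemma mxfun_id A : A \is normalmx -> mxfun A id = A.
Proof. by move/orthomx_spectralP; rewrite /mxfun map_mx_id. Qed.

Lemma psd_spectral_diag_ge0 A j : psd A -> 0 <= spectral_diag A 0 j.
Proof.
move=> Apsd; set U := spectralmx A.
have UAU : U *m A *m adj U = diag_mx (spectral_diag A).
  rewrite -{1}(mxfun_id (psd_normal Apsd)) /mxfun invmx_spectral -/U.
  by rewrite !mulmxA spectralmx_adj mul1mx -mulmxA spectralmx_adj mulmx1 map_mx_id.
pose e : 'cV[C]_d := delta_mx j 0.
have := Apsd (adj U *m e).
have -> : adj (adj U *m e) *m A *m (adj U *m e) = adj e *m (U *m A *m adj U) *m e.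
  by rewrite adjM adjK !mulmxA.
by rewrite UAU qformE qform_delta mxE eqxx mulr1n.
Qed.

End SpectralCalculus.

Section SquareRoot.
Variables (C : numClosedFieldType) (d : nat) (A : 'M[C]_d).

(* Since 0^-1 = 0, this is the Moore-Penrose pseudo-inverse of msqrt A. *)
Definition msqrt_pinv := mxfun A (fun x => (sqrtC x)^-1).
Definition kerproj := mxfun A (fun x => (x == 0)%:R).

Lemma kerproj_adj : adj kerproj = kerproj.
Proof. by apply: mxfun_adj => j; rewrite realn. Qed.

Lemma kerproj_msqrt : kerproj *m msqrt A = 0.
Proof.
rewrite msqrtE mxfunM -(mxfun0 A); apply: eq_mxfun => x.
by have [->|] := eqVneq x 0; rewrite ?sqrtC0 ?mulr0 ?mul0r.
Qed.

Lemma msqrt_pinvK : msqrt_pinv *m msqrt A = 1%:M - kerproj.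
Proof.
apply: (canRL (addrK kerproj)); rewrite msqrtE mxfunM mxfunD -(mxfun1 A).
apply: eq_mxfun => x; have [->|x_neq0] := eqVneq x 0.
  by rewrite sqrtC0 mulr0 add0r.
by rewrite mulVf ?sqrtC_eq0 // addr0.
Qed.

Lemma msqrtK_pinv : msqrt A *m msqrt_pinv = 1%:M - kerproj.
Proof.
apply: (canRL (addrK kerproj)); rewrite msqrtE mxfunM mxfunD -(mxfun1 A).
apply: eq_mxfun => x; have [->|x_neq0] := eqVneq x 0.
  by rewrite sqrtC0 mul0r add0r.
by rewrite mulfV ?sqrtC_eq0 // addr0.
Qed.

Hypothesis A_psd : psd A.

Lemma msqrt_adj : adj (msqrt A) = msqrt A.
Proof. by apply: mxfun_adj => j; rewrite ger0_real ?sqrtC_ge0 ?psd_spectral_diag_ge0. Qed.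

Lemma msqrt_pinv_adj : adj msqrt_pinv = msqrt_pinv.
Proof.
by apply: mxfun_adj => j; rewrite rpredV ger0_real ?sqrtC_ge0 ?psd_spectral_diag_ge0.
Qed.

Lemma msqrt_sq : msqrt A *m msqrt A = A.
Proof.
rewrite msqrtE mxfunM -{2}(mxfun_id (psd_normal A_psd)).
by apply: eq_mxfun => x; rewrite -expr2 sqrtCK.
Qed.

Lemma kerprojM : kerproj *m A = 0.
Proof. by rewrite -msqrt_sq mulmxA kerproj_msqrt mul0mx. Qed.

Lemma msqrt_pinv_resolution :
  msqrt_pinv *m A *m msqrt_pinv + kerproj *m kerproj = 1%:M.
Proof.
rewrite -{1}(mxfun_id (psd_normal A_psd)) !mxfunM mxfunD -(mxfun1 A).
apply: eq_mxfun => x; have [->|x_neq0] := eqVneq x 0.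
  by rewrite mulr1 mulr0 mul0r add0r.
rewrite mulr0 addr0 -{2}(sqrtCK x) expr2 mulrA mulVf ?sqrtC_eq0 //.
by rewrite mul1r mulfV ?sqrtC_eq0.
Qed.

End SquareRoot.

Section Recovery.
Variables (C : numClosedFieldType) (d : nat) (A : 'M[C]_d) (f : 'M[C]_d -> 'M[C]_d).
Hypotheses (A_psd : psd A) (f_lin : linear f) (f_cp : completely_positive f).
Hypothesis f_dual : dual_map f 1%:M = A.

Definition recovery X :=
  f (msqrt_pinv A *m X *m msqrt_pinv A) + kerproj A *m X *m kerproj A.

Lemma kerproj_gram_vanish : f (kerproj A *m adj (kerproj A)) = 0.
Proof.
apply: psd_tr_eq0; first exact: cp_psd_gram.
by rewrite trace_dual_map // f_dual kerproj_adj -mulmxA kerprojM // mulmx0 mxtrace0.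
Qed.

Lemma kerproj_mulmx_vanish Y : f (kerproj A *m Y) = 0.
Proof.
have [] := cp_gram_eq0 (adj Y) f_cp kerproj_gram_vanish.
by rewrite adjK.
Qed.

Lemma mulmx_kerproj_vanish Y : f (Y *m kerproj A) = 0.
Proof.
have [_] := cp_gram_eq0 Y f_cp kerproj_gram_vanish.
by rewrite kerproj_adj.
Qed.

Lemma recovery_channel : quantum_channel recovery.
Proof.
split; first exact: linear_add (linear_comp f_lin (linear_mulmx _ _)) (linear_mulmx _ _).
split; last first.
  rewrite /trace_preserving dual_mapD dual_map_comp_mulmx // dual_map_mulmx f_dual.
  exact: msqrt_pinv_resolution.
apply: cp_add; first apply: (cp_comp f_cp).
  by apply: (eq_cp _ (cp_mulmx (msqrt_pinv A))) => X; rewrite msqrt_pinv_adj.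
by apply: (eq_cp _ (cp_mulmx (kerproj A))) => X; rewrite kerproj_adj.
Qed.

Lemma recovery_msqrt rho : recovery (msqrt A *m rho *m msqrt A) = f rho.
Proof.
have regroup B :
    B *m (msqrt A *m rho *m msqrt A) *m B = B *m msqrt A *m rho *m (msqrt A *m B).
  by rewrite !mulmxA.
rewrite /recovery !regroup msqrt_pinvK msqrtK_pinv kerproj_msqrt !mul0mx addr0.
exact: compress_compl f_lin kerproj_mulmx_vanish mulmx_kerproj_vanish.
Qed.

End Recovery.

Theorem proposition1 (C : numClosedFieldType) (d : nat) (Hd : (1 < d)%N)
  (L : 'M[C]_d -> 'M[C]_d) :
  quantum_operation L ->
  extension L (Lmin L) /\
  (forall L' : 'M[C]_d -> 'M[C]_d, extension L L' ->
     exists Phi : 'M[C]_d -> 'M[C]_d,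
       quantum_channel Phi /\ forall rho, L' rho = Phi (Lmin L rho)).
Proof.
move=> [L_lin [L_cp L_sub]]; set A := 1%:M - dual_map L 1%:M.
have A_psd : psd A := L_sub.
have Lmin_dual : dual_map (Lmin L) 1%:M = A.
  by rewrite /Lmin -/A dual_map_mulmx msqrt_sq.
split.
  split; last by rewrite /trace_preserving dual_mapD Lmin_dual addrC subrK.
  split; first exact: linear_mulmx.
  split; first by apply: (eq_cp _ (cp_mulmx (msqrt A))) => X; rewrite msqrt_adj.
  by rewrite /loewner_le Lmin_dual opprB addrC subrK; apply: psd_dual_map1.
move=> L' [[L'_lin [L'_cp _]] /trace_preserving_add_dual L'_dual].
exists (recovery A L'); split; first exact: recovery_channel.
by move=> rho; rewrite recovery_msqrt.
Qed.
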